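(* Let $G^\sigma$ be a connected oriented unicyclic graph of order $n$ with girth $k<n$, and let $C_k^\sigma$ be its cycle. (1) If $G^\sigma\in\mathscr{U}_1$, then $sr(G^\sigma)\leq n$ if $n$ is even and $sr(G^\sigma)\leq n-1$ if $n$ is odd. (2) If $G^\sigma\in\mathscr{U}_2$, then $sr(G^\sigma)\leq n-1$ if $n$ and $k$ are odd; $\leq n-2$ if $n$ is even and $k$ is odd; $\leq n$ if $n$ is even and $C_k^\sigma$ is oddly-oriented; $\leq n-1$ if $n$ is odd and $C_k^\sigma$ is oddly-oriented; $\leq n-2$ if $n$ is even and $C_k^\sigma$ is evenly-oriented; $\leq n-3$ if $n$ is odd and $C_k^\sigma$ is evenly-oriented.
   Context: An oriented graph $G^\sigma$ is a simple graph with an orientation of each edge. Its skew-adjacency matrix $S(G^\sigma)=(s_{ij})$ has $s_{ij}=1$ if there is an arc from $v_i$ to $v_j$, $s_{ij}=-1$ if there is an arc from $v_j$ to $v_i$, and $0$ otherwise; $sr(G^\sigma)$ is its rank. For an even cycle $u_1\cdots u_ku_1$, its sign is the sign of $\prod_{i=1}^k s_{u_iu_{i+1}}$ ($u_{k+1}=u_1$); it is evenly-oriented if the sign is positive, oddly-oriented if negative. A $\delta$-transformation deletes a pendant vertex (a vertex of degree one) together with its unique neighbor and all incident edges. $\mathscr{U}_1$ is the set of oriented unicyclic graphs of order $n$ with girth $k$ that can be transformed into a graph without edges by finitely many $\delta$-transformations; $\mathscr{U}_2$ is the set of those that can be transformed into the oriented cycle $C_k^\sigma$, or the disjoint union of $C_k^\sigma$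 with isolated vertices, by finitely many $\delta$-transformations. *)

From HB Require Import structures.
From mathcomp Require Import all_boot all_order all_algebra.
From Stdlib Require Import Relations.
Set Implicit Arguments. Unset Strict Implicit. Unset Printing Implicit Defensive.
Import Order.TTheory GRing.Theory Num.Theory.
Local Open Scope ring_scope.

Definition oriented (n : nat) (a : rel 'I_n) : Prop :=
  (forall i, ~~ a i i) /\ (forall i j, a i j -> ~~ a j i).

Definition uedge (n : nat) (a : rel 'I_n) : rel 'I_n := fun i j => a i j || a j i.

Definition skew (n : nat) (a : rel 'I_n) : 'M[rat]_n :=
  \matrix_(i, j) (if a i j then 1 else if a j i then -1 else 0).

Definition sr (n : nat) (a : rel 'I_n) : nat := \rank (skew a).

Definition connected_graph (n : nat) (a : rel 'I_n) : Prop :=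
  forall x y, connect (uedge a) x y.

(* connected with exactly n edges (= n arcs, one per edge) *)
Definition unicyclic (n : nat) (a : rel 'I_n) : Prop :=
  connected_graph a /\ #|[set p : 'I_n * 'I_n | a p.1 p.2]| = n.

Definition is_cycle (n : nat) (a : rel 'I_n) (c : seq 'I_n) : Prop :=
  [/\ (3 <= size c)%N, uniq c & cycle (uedge a) c].

Definition girth (n : nat) (a : rel 'I_n) (k : nat) : Prop :=
  (exists c, is_cycle a c /\ size c = k) /\
  (forall c, is_cycle a c -> (k <= size c)%N).

Definition cycle_prod (n : nat) (a : rel 'I_n) (c : seq 'I_n) : rat :=
  \prod_(x <- c) skew a x (next c x).

Definition evenly_oriented (n : nat) (a : rel 'I_n) (c : seq 'I_n) : Prop :=
  ~~ odd (size c) /\ 0 < cycle_prod a c.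

Definition oddly_oriented (n : nat) (a : rel 'I_n) (c : seq 'I_n) : Prop :=
  ~~ odd (size c) /\ cycle_prod a c < 0.

(* The current graph is the subgraph induced by the remaining vertex set V. *)
Definition delta_step (n : nat) (a : rel 'I_n) (V W : {set 'I_n}) : Prop :=
  exists u v, [/\ u \in V, [set w in V | uedge a u w] = [set v]
                 & W = V :\: [set u; v]].

Definition delta_reach (n : nat) (a : rel 'I_n) (W : {set 'I_n}) : Prop :=
  clos_refl_trans _ (delta_step a) [set: 'I_n] W.

Definition in_U1 (n : nat) (a : rel 'I_n) : Prop :=
  exists W, delta_reach a W /\
    (forall x y, x \in W -> y \in W -> ~~ uedge a x y).

(* U_2: transformable into the cycle C (given by c), possibly together with
   isolated vertices: the remaining set contains the cycle, and the edges of
   the remaining induced subgraph are exactly the edges of the cycle. *)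
Definition in_U2 (n : nat) (a : rel 'I_n) (c : seq 'I_n) : Prop :=
  exists W, [/\ delta_reach a W, {subset c <= W} &
    (forall x y, x \in W -> y \in W ->
       (uedge a x y <->
        [&& x \in c, y \in c & (y == next c x) || (x == next c y)]))].

(* In
   the skew-adjacency matrix restricted to the current vertex set, the entries
   that disappear all lie in the row or the column of v, because u is adjacent
   to v only; so each step lowers the rank by at most 2 and the order by
   exactly 2.  If m steps lead from G to the vertex set W, then n = |W| + 2m and
   sr(G) <= rank S_W + 2m.  For G in U_2, S_W is the skew-adjacency matrix of
   the cycle C_k padded with zeros.  When k is odd it is a skew-symmetric
   matrix of odd order, hence singular; when C_k is evenly oriented, the two
   vectors supported on the even, resp. odd, positions of the cycle and
   weighted by the partial products of the arc signs lie in its kernel.  This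
   bounds rank S_W by k - 1, resp. k - 2, and the parities of n, |W| and k give
   the remaining unit.  The other bounds only use sr(G) <= n and the
   singularity of skew-symmetric matrices of odd order. *)

From Pilot Require Import Defs.
From HB Require Import structures.
From Stdlib Require Import Relations.
From mathcomp Require Import all_boot all_order all_algebra zify.
Import Order.TTheory GRing.Theory Num.Theory.

Set Implicit Arguments.
Unset Strict Implicit.
Unset Printing Implicit Defensive.
Local Open Scope ring_scope.

Lemma mxrank_skew_odd (R : numFieldType) m (M : 'M[R]_m) :
  M^T = - M -> odd m -> (\rank M <= m.-1)%N.
Proof.
move=> MT m_odd.
have detMT : \det M^T = - \det M.
  by rewrite MT -scaleN1r detZ -signr_odd m_odd expr1 mulN1r.
have detM0 : \det M = 0 by apply/eqP; rewrite -eqNr -detMT det_tr.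
have : ~~ row_free M by rewrite row_free_unit unitmxE detM0 unitr0.
by rewrite /row_free; have := rank_leq_row M; lia.
Qed.

Lemma mxrank_rowsub_support (F : fieldType) m p k (f : 'I_k -> 'I_m)
    (M : 'M[F]_(m, p)) :
  (forall i j, i \notin codom f -> M i j = 0) -> (\rank M <= \rank (rowsub f M))%N.
Proof.
move=> M0; apply/mxrankS/row_subP => i.
have [/codomP[j ->]|/M0 Mi0] := boolP (i \in codom f).
  by rewrite -row_rowsub row_sub.
suff -> : row i M = 0 by apply: sub0mx.
by apply/rowP => j; rewrite !mxE Mi0.
Qed.

Lemma mxrank_mxsub_support (F : fieldType) m k (f : 'I_k -> 'I_m) (M : 'M[F]_m) :
  (forall i j, M i j != 0 -> (i \in codom f) && (j \in codom f)) ->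
  (\rank M <= \rank (mxsub f f M))%N.
Proof.
move=> supp.
have Mrow0 i j : i \notin codom f -> M i j = 0.
  by apply: contraNeq => /supp /andP[].
have Mcol0 i j : i \notin codom f -> (colsub f M^T) i j = 0.
  by rewrite !mxE; apply: contraNeq => /supp /andP[].
apply: leq_trans (mxrank_rowsub_support Mrow0) _.
rewrite -mxrank_tr -[X in (_ <= X)%N]mxrank_tr trmx_mxsub.
apply: leq_trans (mxrank_rowsub_support Mcol0) _.
suff -> : rowsub f (colsub f M^T) = (mxsub f f M)^T by [].
by apply/matrixP => i j; rewrite !mxE.
Qed.

Lemma mxrank_row_col_support (F : fieldType) m (D : 'M[F]_m) v :
  (forall i j, i != v -> j != v -> D i j = 0) -> (\rank D <= 2)%N.
Proof.
move=> D0; pose e : 'rV[F]_m := delta_mx 0 v.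
have sub_De : (D <= row v D + e)%MS.
  apply/row_subP => i; have [->|iv] := eqVneq i v; first exact: addsmxSl.
  have -> : row i D = D i v *: e.
    apply/rowP => j; rewrite !mxE; have [->|jv] := eqVneq j v; first by rewrite mulr1.
    by rewrite D0 // mulr0.
  by rewrite scalemx_sub ?addsmxSr.
apply: leq_trans (mxrankS sub_De) _.
apply: leq_trans (mxrank_adds_leqif _ _) _.
exact: (leq_add (rank_leq_row _) (rank_leq_row _)).
Qed.

Definition restrict_mx (R : nmodType) m (V : {set 'I_m}) (M : 'M[R]_m) : 'M[R]_m :=
  \matrix_(i, j) if (i \in V) && (j \in V) then M i j else 0.

Lemma restrict_mxT (R : nmodType) m (M : 'M[R]_m) : restrict_mx setT M = M.
Proof. by apply/matrixP => i j; rewrite mxE !inE. Qed.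

Lemma mxrank_restrict_pendant (F : fieldType) m (V : {set 'I_m}) (M : 'M[F]_m) u v :
  (forall w, w \in V -> w != v -> M u w = 0 /\ M w u = 0) ->
  (\rank (restrict_mx V M) <= \rank (restrict_mx (V :\: [set u; v]) M) + 2)%N.
Proof.
move=> pendant; set W := V :\: _.
rewrite -[restrict_mx V M](subrK (restrict_mx W M)) addrC.
apply: leq_trans (mxrank_add _ _) _; rewrite leq_add2l.
apply: (mxrank_row_col_support (v := v)) => i j iv jv.
rewrite !mxE !inE (negbTE iv) (negbTE jv) !orbF.
case: (eqVneq i u) iv => [-> | iu] iv; case: (eqVneq j u) jv => [-> | ju] jv /=;
  rewrite ?andbF ?andbT ?subr0 ?subrr //; case: ifP => // /andP[iV jV].
- by case: (pendant _ iV iv).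
- by case: (pendant _ jV jv).
- by case: (pendant _ iV iv).
Qed.

Section SkewAdjacency.
Variables (n : nat) (a : rel 'I_n).
Hypothesis a_oriented : oriented a.

Lemma uedgeC x y : uedge a x y = uedge a y x.
Proof. by rewrite /uedge orbC. Qed.

Lemma uedge_irr x : ~~ uedge a x x.
Proof. by rewrite /uedge orbb; case: a_oriented. Qed.

Lemma skewN x y : Defs.skew a y x = - Defs.skew a x y.
Proof.
case: a_oriented => _ asym; rewrite /Defs.skew !mxE.
case axy: (a x y); case ayx: (a y x) => //=; rewrite ?opprK ?oppr0 //.
by move: (asym _ _ axy); rewrite ayx.
Qed.

Lemma trmx_skew : (Defs.skew a)^T = - Defs.skew a.
Proof. by apply/matrixP => i j; rewrite mxE [RHS]mxE skewN. Qed.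

Lemma skew_eq0 x y : ~~ uedge a x y -> Defs.skew a x y = 0.
Proof. by rewrite /uedge /Defs.skew mxE; case: (a x y); case: (a y x). Qed.

Lemma skew_sqr x y : uedge a x y -> Defs.skew a x y ^+ 2 = 1.
Proof.
rewrite /uedge /Defs.skew mxE expr2 => /orP[->|ayx]; first by rewrite mulr1.
by case: (a x y); rewrite ?ayx ?mulrNN mulr1.
Qed.

Lemma delta_step_rank V W : delta_step a V W ->
  #|V| = (#|W| + 2)%N /\
  (\rank (restrict_mx V (Defs.skew a)) <= \rank (restrict_mx W (Defs.skew a)) + 2)%N.
Proof.
case=> u [v [uV Nu ->]].
have only_v w : w \in V -> uedge a u w -> w = v.
  by move=> wV uw; apply/set1P; rewrite -Nu inE wV.
have /setIdP[vV uv] : v \in [set w in V | uedge a u w] by rewrite Nu set11.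
have vu : v != u by apply: contraTneq uv => ->; apply: uedge_irr.
split.
  rewrite (cardsD1 u V) uV (cardsD1 v (V :\ u)) !inE vu vV setDDl.
  by rewrite add1n addn2.
apply: mxrank_restrict_pendant => w wV wv.
have uw : ~~ uedge a u w by apply: contra wv => /(only_v _ wV)->.
by rewrite !skew_eq0 // uedgeC.
Qed.

Lemma delta_reach_rank W : delta_reach a W ->
  exists m, n = (#|W| + 2 * m)%N /\
            (sr a <= \rank (restrict_mx W (Defs.skew a)) + 2 * m)%N.
Proof.
move=> /clos_rt_rtn1_iff; elim=> [|V U /delta_step_rank [cardV rkV] _ [m [cardn rkn]]].
  by exists 0%N; rewrite cardsT card_ord /sr restrict_mxT !addn0.
exists m.+1; split; first by move: cardn; rewrite cardV; lia.
by apply: leq_trans rkn _; lia.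
Qed.

End SkewAdjacency.

Lemma val_ordS k (i : 'I_k) : val (ordS i) = (if i.+1 == k then 0 else i.+1)%N.
Proof.
rewrite /= ; case: eqP => [->|ik]; first exact: modnn.
by rewrite modn_small // ltn_neqAle (ltn_ord i) andbT; apply/eqP.
Qed.

Lemma odd_ordS_ord_pred k (i : 'I_k) : ~~ odd k -> odd (ordS i) = odd (ord_pred i).
Proof.
move=> k_even; rewrite -[in LHS](ord_predK i); set j := ord_pred i.
rewrite !val_ordS; have := ltn_ord j; case: eqP; case: eqP => /=; lia.
Qed.

Lemma ordS_neq_ord_pred k (i : 'I_k) : (2 < k)%N -> ordS i != ord_pred i.
Proof.
move=> k_gt2; rewrite -[in X in X != _](ord_predK i); set j := ord_pred i.
apply/eqP => /(congr1 val); rewrite !val_ordS; have := ltn_ord j.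
case: eqP; case: eqP => /=; lia.
Qed.

Section EvenCycleMatrix.
Variables (R : numFieldType) (k : nat) (T : 'M[R]_k).
Hypotheses (k_gt2 : (2 < k)%N) (k_even : ~~ odd k).
Hypothesis TN : forall i j, T j i = - T i j.
Hypothesis T_support : forall i j, T i j != 0 -> j = ordS i \/ i = ordS j.
Hypothesis T_sqr : forall i, T i (ordS i) ^+ 2 = 1.
Hypothesis T_prod : \prod_i T i (ordS i) = 1.

Definition cycle_partial_prod (m : nat) := \prod_(i < k | (i < m)%N) T i (ordS i).
Local Notation p := cycle_partial_prod.

Lemma cycle_partial_prod0 : p 0 = 1.
Proof. by rewrite /p big_pred0. Qed.

Lemma cycle_partial_prodS (i : 'I_k) : p i.+1 = p i * T i (ordS i).
Proof.
rewrite /p (bigD1 i) ?ltnSn //= mulrC; congr (_ * _).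
by apply: eq_bigl => j; rewrite ltnS ltn_neqAle andbC -val_eqE.
Qed.

Lemma cycle_partial_prod_sqr (i : 'I_k) : p i ^+ 2 = 1.
Proof. by rewrite /p -prodrXl big1 // => j _; exact: T_sqr. Qed.

Lemma mul_cycle_partial_prod_ordS (i : 'I_k) : T i (ordS i) * p (ordS i) = p i.
Proof.
rewrite val_ordS; case: eqP => [iSk|_].
  rewrite cycle_partial_prod0 mulr1.
  have : p i * T i (ordS i) = 1.
    by rewrite -cycle_partial_prodS iSk -T_prod /p; apply: eq_bigl => j; rewrite ltn_ord.
  by move/(congr1 (fun x => p i * x)); rewrite mulrA -expr2 cycle_partial_prod_sqr mul1r mulr1.
by rewrite cycle_partial_prodS mulrCA -expr2 T_sqr mulr1.
Qed.

Lemma mul_cycle_partial_prod (i : 'I_k) : T i (ordS i) * p i = p (ordS i).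
Proof.
by rewrite -(mul_cycle_partial_prod_ordS i) mulrA -expr2 T_sqr mul1r.
Qed.

(* The factor [p b] makes the first two rows the identity matrix. *)
Definition even_cycle_kernel : 'M[R]_(k, 2) :=
  \matrix_(j, b) if odd j == odd b then p j * p b else 0.

Lemma even_cycle_kernelP : T *m even_cycle_kernel = 0.
Proof.
apply/matrixP => i b; rewrite !mxE.
have Spred : ord_pred i != ordS i by rewrite eq_sym ordS_neq_ord_pred.
rewrite (bigD1 (ordS i)) // (bigD1 (ord_pred i)) //= big1 ?addr0; last first.
  move=> j /andP[jS jpred]; rewrite mxE.
  have [->|/T_support[jSi|iSj]] := eqVneq (T i j) 0; first by rewrite mul0r.
    by rewrite jSi eqxx in jS.
  by rewrite iSj ordSK eqxx in jpred.
rewrite !mxE odd_ordS_ord_pred //; case: ifP => _; last by rewrite !mulr0 addr0.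
rewrite !mulrA mul_cycle_partial_prod_ordS TN -[X in T _ X](ord_predK i).
by rewrite mulNr mul_cycle_partial_prod ord_predK mulNr addrN.
Qed.

Lemma mxrank_even_cycle_kernel : \rank even_cycle_kernel = 2.
Proof.
apply/eqP; rewrite eqn_leq rank_leq_col /=.
have k_ge2 : (2 <= k)%N by apply: ltnW.
have <- : \rank (rowsub (widen_ord k_ge2) even_cycle_kernel) = 2.
  rewrite -[RHS](mxrank1 R 2); congr (\rank _).
  apply/matrixP => i j; rewrite !mxE /=.
  case: i j => [[|[|//]] ?] [[|[|//]] ?] //=; rewrite ?cycle_partial_prod0 ?mulr1 //.
  by rewrite -expr2 (cycle_partial_prod_sqr (Ordinal (ltnW k_gt2))).
exact/mxrankS/rowsub_sub.
Qed.

Lemma mxrank_even_cycle_mx : (\rank T <= k - 2)%N.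
Proof.
have := mulmx0_rank_max even_cycle_kernelP; rewrite mxrank_even_cycle_kernel; lia.
Qed.

End EvenCycleMatrix.

Lemma next_nth_uniq (T : eqType) (s : seq T) (x0 : T) i :
  uniq s -> (i < size s)%N ->
  next s (nth x0 s i) = nth x0 s (if i.+1 == size s then 0 else i.+1).
Proof.
move=> s_uniq i_lt; rewrite next_nth mem_nth // index_uniq //.
case: s s_uniq i_lt => [//|y s'] _ /= i_lt.
case: eqP => /= iS; first by rewrite nth_default //; lia.
by apply: set_nth_default; lia.
Qed.

Section CycleOfGraph.
Variables (n : nat) (a : rel 'I_n) (c : seq 'I_n) (d : 'I_n).
Hypotheses (a_oriented : oriented a) (c_uniq : uniq c).
Hypothesis c_cycle : cycle (uedge a) c.
Hypothesis c_chordless : forall x y, x \in c -> y \in c -> uedge a x y ->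
  (y == next c x) || (x == next c y).

Definition cycle_vertex (i : 'I_(size c)) : 'I_n := nth d c i.

Definition cycle_mx : 'M[rat]_(size c) :=
  mxsub cycle_vertex cycle_vertex (Defs.skew a).

Lemma codom_cycle_vertex x : (x \in codom cycle_vertex) = (x \in c).
Proof.
apply/codomP/idP => [[i ->]|xc]; first exact: mem_nth.
by exists (Ordinal (etrans (index_mem x c) xc)); rewrite /cycle_vertex nth_index.
Qed.

Lemma cycle_vertex_inj : injective cycle_vertex.
Proof. by move=> i j /eqP; rewrite nth_uniq // => /eqP /val_inj. Qed.

Lemma next_cycle_vertex i : next c (cycle_vertex i) = cycle_vertex (ordS i).
Proof. by rewrite /cycle_vertex next_nth_uniq // val_ordS. Qed.

Lemma cycle_mxN i j : cycle_mx j i = - cycle_mx i j.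
Proof. by rewrite mxE [cycle_mx i j]mxE skewN. Qed.

Lemma cycle_mx_sqr i : cycle_mx i (ordS i) ^+ 2 = 1.
Proof.
by rewrite mxE -next_cycle_vertex skew_sqr // (next_cycle c_cycle) ?mem_nth.
Qed.

Lemma cycle_mx_support i j : cycle_mx i j != 0 -> j = ordS i \/ i = ordS j.
Proof.
rewrite mxE => nz.
have /c_chordless : uedge a (cycle_vertex i) (cycle_vertex j).
  by apply: contraNT nz => /skew_eq0 ->.
rewrite !mem_nth // !next_cycle_vertex.
by case/(_ isT isT)/orP => /eqP/cycle_vertex_inj ->; [left | right].
Qed.

Lemma cycle_prod_cycle_mx : cycle_prod a c = \prod_i cycle_mx i (ordS i).
Proof.
rewrite /cycle_prod (big_nth d) big_mkord; apply: eq_bigr => i _.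
by rewrite [cycle_mx _ _]mxE -next_cycle_vertex.
Qed.

Lemma mxrank_cycle_mx_odd : odd (size c) -> (\rank cycle_mx <= (size c).-1)%N.
Proof.
apply: mxrank_skew_odd; apply/matrixP => i j.
by rewrite mxE [RHS]mxE cycle_mxN.
Qed.

Lemma mxrank_cycle_mx_evenly : (3 <= size c)%N -> evenly_oriented a c ->
  (\rank cycle_mx <= size c - 2)%N.
Proof.
move=> c_ge3 [c_even prod_gt0].
apply: mxrank_even_cycle_mx => //; [exact: cycle_mxN | exact: cycle_mx_support |
  exact: cycle_mx_sqr |].
have : cycle_prod a c ^+ 2 == 1.
  by rewrite cycle_prod_cycle_mx -prodrXl; apply/eqP/big1 => i _; exact: cycle_mx_sqr.
rewrite sqrf_eq1 -cycle_prod_cycle_mx => /orP[/eqP // | /eqP prodN1].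
by move: prod_gt0; rewrite prodN1 oppr_gt0 ltr10.
Qed.

Lemma mxrank_restrict_cycle (W : {set 'I_n}) : {subset c <= W} ->
  (forall x y, x \in W -> y \in W -> uedge a x y -> (x \in c) && (y \in c)) ->
  (\rank (restrict_mx W (Defs.skew a)) <= \rank cycle_mx)%N.
Proof.
move=> cW W_edges.
apply: leq_trans (mxrank_mxsub_support (f := cycle_vertex) _) _.
  move=> x y; rewrite mxE !codom_cycle_vertex.
  case: ifP => [/andP[xW yW] nz|]; last by rewrite eqxx.
  by apply: W_edges => //; apply: contraNT nz => /skew_eq0 ->.
apply/eq_leq; congr (\rank _); apply/matrixP => i j.
by rewrite !mxE !cW ?mem_nth.
Qed.

End CycleOfGraph.

Lemma in_U2_chordless n (a : rel 'I_n) (c : seq 'I_n) : in_U2 a c ->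
  forall x y, x \in c -> y \in c -> uedge a x y ->
    (y == next c x) || (x == next c y).
Proof.
case=> W [_ cW W_edges] x y xc yc /(W_edges x y (cW x xc) (cW y yc)).
by case/and3P.
Qed.

Lemma in_U2_sr_le n (a : rel 'I_n) (c : seq 'I_n) (d : 'I_n) :
  oriented a -> uniq c -> in_U2 a c ->
  exists w m, [/\ n = (w + 2 * m)%N, (size c <= w)%N &
                 (sr a <= \rank (cycle_mx a c d) + 2 * m)%N].
Proof.
move=> a_oriented c_uniq [W [reachW cW W_edges]].
have [m [cardW sr_le]] := delta_reach_rank a_oriented reachW.
exists #|W|, m; split=> //.
  by rewrite -(card_uniqP c_uniq); apply/subset_leq_card/subsetP.
apply: leq_trans sr_le _; rewrite leq_add2r mxrank_restrict_cycle //.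
by move=> x y xW yW /(W_edges x y xW yW) /and3P[-> ->].
Qed.

Theorem theorem5p1 (n : nat) (a : rel 'I_n) (c : seq 'I_n) (k : nat) :
  oriented a -> unicyclic a -> is_cycle a c -> size c = k -> girth a k ->
  (k < n)%N ->
  (in_U1 a ->
     (~~ odd n -> (sr a <= n)%N) /\ (odd n -> (sr a <= n - 1)%N)) /\
  (in_U2 a c ->
     ((odd n -> odd k -> (sr a <= n - 1)%N) /\
         ((~~ odd n -> odd k -> (sr a <= n - 2)%N) /\
         ((~~ odd n -> oddly_oriented a c -> (sr a <= n)%N) /\
         ((odd n -> oddly_oriented a c -> (sr a <= n - 1)%N) /\
         ((~~ odd n -> evenly_oriented a c -> (sr a <= n - 2)%N) /\
         (odd n -> evenly_oriented a c -> (sr a <= n - 3)%N))))))).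
Proof.
move=> a_oriented _ [c_ge3 c_uniq c_cycle] <- _ k_lt_n.
have sr_le_n : (sr a <= n)%N by apply: rank_leq_row.
have sr_odd : odd n -> (sr a <= n - 1)%N.
  by rewrite subn1; apply: mxrank_skew_odd; apply: trmx_skew.
split=> [// | U2].
have d : 'I_n := Ordinal k_lt_n.
have [w [m [n_eq c_le_w sr_le]]] := in_U2_sr_le d a_oriented c_uniq U2.
have evenly_rank := mxrank_cycle_mx_evenly d a_oriented c_uniq c_cycle
  (in_U2_chordless U2) c_ge3.
split; first by move=> /sr_odd.
split.
  by move=> n_even /[dup] k_odd /(mxrank_cycle_mx_odd d a_oriented); lia.
split; first by [].
split; first by move=> /sr_odd.
by split=> n_par E; have := evenly_rank E; case: E => c_even _; lia.
Qed.
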